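(* Let $h\colon(0,\infty)\to(0,\infty)$ be non-decreasing and continuous, and let $\Theta$ be any one of $\Theta^0_h,\Theta^\infty_h,\Theta_h$. Then either $\lim_{r\to0^+}\Theta(r)=0$, or $\Theta(r)=1$ for every $r\in(0,1]$.
   Context: For $h\colon(0,\infty)\to(0,\infty)$ and $r>0$: $\Theta^0_h(r)=\limsup_{t\to0^+}h(rt)/h(t)$, $\Theta^\infty_h(r)=\limsup_{t\to\infty}h(rt)/h(t)$, $\Theta_h(r)=\sup_{t>0}h(rt)/h(t)$. *)

From mathcomp Require Import all_boot all_order all_algebra.
From mathcomp Require Import all_classical all_reals all_analysis.
Set Implicit Arguments. Unset Strict Implicit. Unset Printing Implicit Defensive.
Import Order.TTheory GRing.Theory Num.Theory numFieldNormedType.Exports.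
Local Open Scope classical_set_scope.
Local Open Scope ring_scope.

Definition hratio (R : realType) (h : R -> R) (r t : R) : \bar R :=
  (h (r * t) / h t)%:E.

(* Theta^0_h(r) = limsup_{t->0+} h(rt)/h(t) = inf_{d>0} sup_{0<t<d} h(rt)/h(t) *)
Definition Theta0 (R : realType) (h : R -> R) (r : R) : \bar R :=
  ereal_inf [set ereal_sup [set hratio h r t | t in `]0, d[] | d in `]0, +oo[%classic].

(* Theta^oo_h(r) = limsup_{t->oo} h(rt)/h(t) = inf_{M>0} sup_{t>M} h(rt)/h(t) *)
Definition ThetaInf (R : realType) (h : R -> R) (r : R) : \bar R :=
  ereal_inf [set ereal_sup [set hratio h r t | t in `]M, +oo[] | M in `]0, +oo[%classic].

Definition Theta (R : realType) (h : R -> R) (r : R) : \bar R :=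
  ereal_sup [set hratio h r t | t in `]0, +oo[%classic].

From mathcomp Require Import all_boot all_order all_algebra.
From mathcomp Require Import all_classical all_reals all_analysis.
Import Order.TTheory GRing.Theory Num.Theory numFieldNormedType.Exports.
Local Open Scope classical_set_scope.
Local Open Scope ring_scope.

(* Each of the three functions Θ is non-decreasing, takes values in [0, 1] on
   (0, 1] (monotonicity of h), and is submultiplicative there, because
   h(rst)/h(t) = h(r·st)/h(st) · h(st)/h(t).  If Θ(r) = c < 1 for one r ≤ 1,
   then Θ(r^n) ≤ c^n → 0, and monotonicity forces Θ → 0 at 0+; otherwise
   Θ = 1 on (0, 1]. *)

Section SubmultiplicativeDichotomy.
Variables (R : realType) (f : R -> \bar R).
Hypothesis f_ge0 : forall {r}, 0 < r -> (0 <= f r)%E.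
Hypothesis f_le1 : forall {r}, 0 < r -> r <= 1 -> (f r <= 1)%E.
Hypothesis f_nondecreasing : forall {r s}, 0 < r -> r <= s -> (f r <= f s)%E.
Hypothesis f_submul : forall {r s}, 0 < r -> r <= 1 -> 0 < s -> s <= 1 ->
  (f (r * s) <= f r * f s)%E.

Lemma submul_expr r c n : 0 < r -> r <= 1 -> f r = c%:E ->
  (f (r ^+ n.+1) <= (c ^+ n.+1)%:E)%E.
Proof.
move=> r0 r1 frc; elim: n => [|n IHn]; first by rewrite !expr1 frc.
rewrite exprS [in leRHS]exprS EFinM -frc.
apply: le_trans (f_submul r0 r1 (exprn_gt0 _ r0) (exprn_ile1 _ (ltW r0) r1)) _.
by apply: lee_pmul => //; apply: f_ge0; rewrite // exprn_gt0.
Qed.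

Lemma cvg_at_right0_ereal_inf :
  f r @[r --> 0^'+] --> ereal_inf [set f r | r in `]0, +oo[].
Proof.
apply: nondecreasing_at_right_cvge => //.
by move=> r s; rewrite !in_itv /= !andbT => r0 _; exact: f_nondecreasing.
Qed.

Lemma submul_dichotomy :
  (f r @[r --> 0^'+] --> 0%E) \/ (forall r, 0 < r -> r <= 1 -> f r = 1%E).
Proof.
have [f_eq1|] := pselect (forall r, 0 < r -> r <= 1 -> f r = 1%E); first by right.
move=> /existsNP[r /not_implyP[r0 /not_implyP[r1 /eqP fr_neq1]]].
left; have [fr0 fr1] := (f_ge0 r0, f_le1 r0 r1).
have frE : f r = (fine (f r))%:E.
  by rewrite fineK // ge0_fin_numE // (le_lt_trans fr1) ?ltry.
set c := fine (f r) in frE.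
have c0 : 0 <= c by rewrite -lee_fin -frE.
have c1 : c < 1 by rewrite -lte_fin -frE lt_neqAle fr_neq1 fr1.
suff <- : ereal_inf [set f r | r in `]0, +oo[] = 0%E.
  exact: cvg_at_right0_ereal_inf.
apply/eqP; rewrite eq_le; apply/andP; split; last first.
  by apply: le_ereal_inf_tmp => _ [s + <-]; rewrite /= in_itv /= andbT; exact: f_ge0.
apply/lee_addgt0Pr => e e0; rewrite add0e.
have c_expr_cvg0 : c ^+ n @[n --> \oo] --> 0 by apply: cvg_expr; rewrite ger0_norm.
move/cvgrPdist_lt/(_ e e0): c_expr_cvg0 => [n _ cn_lt].
have cn_e : c ^+ n.+1 < e.
  by have := cn_lt n.+1 (leqnSn n); rewrite sub0r normrN ger0_norm ?exprn_ge0.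
apply: ge_ereal_inf; exists (f (r ^+ n.+1)).
  by exists (r ^+ n.+1); rewrite // /= in_itv /= andbT exprn_gt0.
by apply: le_trans (submul_expr _ _ n r0 r1 frE) _; rewrite lee_fin ltW.
Qed.

End SubmultiplicativeDichotomy.

Lemma ereal_inf_ge_pmull (R : realType) (k : R) (x : \bar R) (S : set (\bar R)) :
  0 <= k -> S !=set0 -> (forall y, S y -> (x <= k%:E * y)%E) ->
  (x <= k%:E * ereal_inf S)%E.
Proof.
rewrite le_eqVlt => /predU1P[<- [y Sy] x_le|k0 _ x_le].
  by rewrite mul0e; have := x_le _ Sy; rewrite mul0e.
by rewrite -ereal_inf_pZl //; apply: le_ereal_inf_tmp => _ [y Sy <-]; exact: x_le.
Qed.

Lemma ereal_inf_ge_mul (R : realType) (x : \bar R) (A B : set (\bar R)) :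
  A !=set0 -> B !=set0 ->
  (forall a, A a -> 0 <= a < +oo)%E -> (forall b, B b -> 0 <= b < +oo)%E ->
  (forall a b, A a -> B b -> x <= a * b)%E ->
  (x <= ereal_inf A * ereal_inf B)%E.
Proof.
move=> [a0 Aa0] B_neq0 A_fin B_fin x_le.
have finE (y : \bar R) : (0 <= y < +oo)%E -> y = (fine y)%:E.
  by move=> /andP[y0 yoo]; rewrite fineK // ge0_fin_numE.
have fine_ge0 (y : \bar R) : (0 <= y < +oo)%E -> 0 <= fine y.
  by move=> y_fin; rewrite -lee_fin -finE //; case/andP: y_fin.
have infA_fin : (0 <= ereal_inf A < +oo)%E.
  apply/andP; split; first by apply: le_ereal_inf_tmp => a /A_fin /andP[].
  by apply: le_lt_trans (ereal_inf_lbound Aa0) _; have /andP[] := A_fin _ Aa0.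
rewrite (finE _ infA_fin); apply: ereal_inf_ge_pmull (fine_ge0 _ infA_fin) B_neq0 _.
move=> b Bb; rewrite -finE // muleC (finE _ (B_fin _ Bb)).
apply: ereal_inf_ge_pmull (fine_ge0 _ (B_fin _ Bb)) (ex_intro _ a0 Aa0) _.
by move=> a Aa; rewrite -finE ?B_fin // muleC; exact: x_le.
Qed.

(* Theta0, ThetaInf and Theta are all infima over [d] in [D] of suprema of
   h(rt)/h(t) over [t] in a window [W d].  [windows_shrink] lets the
   factorization of h(rst)/h(t) bound the sup at some [d] by the product of
   the sups at [d1] and [d2]. *)
Record admissible_windows (R : realType) (D : set R) (W : R -> set R) : Prop := {
  windows_index_neq0 : D !=set0;
  windows_gt0 : forall d t, D d -> W d t -> 0 < t;
  windows_neq0 : forall d, D d -> W d !=set0;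
  windows_shrink : forall s, 0 < s -> s <= 1 -> forall d1 d2, D d1 -> D d2 ->
    exists2 d, D d & forall t, W d t -> W d1 (s * t) /\ W d2 t }.

Arguments windows_index_neq0 {R D W}.
Arguments windows_gt0 {R D W} _ {d t}.
Arguments windows_neq0 {R D W} _ {d}.
Arguments windows_shrink {R D W} _ {s} _ _ {d1 d2}.
Arguments admissible_windows {R}.

Section WindowedLimsup.
Variables (R : realType) (h : R -> R).
Hypothesis hpos : forall x, 0 < x -> 0 < h x.
Hypothesis hmono : forall x y, 0 < x -> x <= y -> h x <= h y.

Lemma hratio_ge0 r t : 0 < r -> 0 < t -> (0 <= hratio h r t)%E.
Proof.
by move=> r0 t0; rewrite lee_fin divr_ge0 // ltW // hpos // mulr_gt0.
Qed.

Lemma hratio_le r s t : 0 < r -> r <= s -> 0 < t -> (hratio h r t <= hratio h s t)%E.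
Proof.
move=> r0 rs t0; rewrite lee_fin ler_pM2r ?invr_gt0 ?hpos //.
by apply: hmono; rewrite ?mulr_gt0 // ler_pM2r.
Qed.

Lemma hratio_le1 r t : 0 < r -> r <= 1 -> 0 < t -> (hratio h r t <= 1)%E.
Proof.
move=> r0 r1 t0; have := hratio_le _ _ _ r0 r1 t0.
by rewrite /hratio mul1r divff // gt_eqF // hpos.
Qed.

Lemma hratioM r s t : 0 < s * t ->
  hratio h (r * s) t = (hratio h r (s * t) * hratio h s t)%E.
Proof.
move=> st0; rewrite /hratio -EFinM [r * (s * t)]mulrA.
by rewrite [in RHS]mulrA divfK // gt_eqF // hpos.
Qed.

Definition window_sup (W : R -> set R) (r d : R) : \bar R :=
  ereal_sup [set hratio h r t | t in W d].

Definition window_limsup (D : set R) (W : R -> set R) (r : R) : \bar R :=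
  ereal_inf [set window_sup W r d | d in D].

Variables (D : set R) (W : R -> set R).
Hypothesis DW : admissible_windows D W.

Lemma window_sup_ge0 r d : 0 < r -> D d -> (0 <= window_sup W r d)%E.
Proof.
move=> r0 Dd; have [t Wt] := windows_neq0 DW Dd.
apply: le_ereal_sup_tmp; exists (hratio h r t); first by exists t.
exact: hratio_ge0 (windows_gt0 DW Dd Wt).
Qed.

Lemma window_sup_le1 r d : 0 < r -> r <= 1 -> D d -> (window_sup W r d <= 1)%E.
Proof.
move=> r0 r1 Dd; apply: ge_ereal_sup => _ [t Wt <-].
exact: hratio_le1 (windows_gt0 DW Dd Wt).
Qed.

Lemma window_sup_submul r s d1 d2 : 0 < r -> 0 < s -> s <= 1 -> D d1 -> D d2 ->
  exists2 d, D d & (window_sup W (r * s) d <= window_sup W r d1 * window_sup W s d2)%E.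
Proof.
move=> r0 s0 s1 Dd1 Dd2; have [d Dd Wd] := windows_shrink DW s0 s1 Dd1 Dd2.
exists d => //; apply: ge_ereal_sup => _ [t Wt <-].
have [W1st W2t] := Wd t Wt; have t0 := windows_gt0 DW Dd Wt.
have st0 : 0 < s * t by rewrite mulr_gt0.
rewrite hratioM //; apply: lee_pmul; rewrite ?hratio_ge0 //.
- by apply: ereal_sup_ubound; exists (s * t).
- by apply: ereal_sup_ubound; exists t.
Qed.

Lemma window_limsup_ge0 r : 0 < r -> (0 <= window_limsup D W r)%E.
Proof.
by move=> r0; apply: le_ereal_inf_tmp => _ [d Dd <-]; exact: window_sup_ge0.
Qed.

Lemma window_limsup_le1 r : 0 < r -> r <= 1 -> (window_limsup D W r <= 1)%E.
Proof.
move=> r0 r1; have [d Dd] := windows_index_neq0 DW.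
apply: ge_ereal_inf; exists (window_sup W r d); first by exists d.
exact: window_sup_le1.
Qed.

Lemma window_limsup_nondecreasing r s : 0 < r -> r <= s ->
  (window_limsup D W r <= window_limsup D W s)%E.
Proof.
move=> r0 rs; apply: le_ereal_inf_tmp => _ [d Dd <-]; apply: ge_ereal_inf.
exists (window_sup W r d); first by exists d.
apply: ge_ereal_sup => _ [t Wt <-]; apply: le_ereal_sup_tmp.
exists (hratio h s t); first by exists t.
exact: hratio_le (windows_gt0 DW Dd Wt).
Qed.

Lemma window_limsup_submul r s : 0 < r -> r <= 1 -> 0 < s -> s <= 1 ->
  (window_limsup D W (r * s) <= window_limsup D W r * window_limsup D W s)%E.
Proof.
move=> r0 r1 s0 s1; have [d0 Dd0] := windows_index_neq0 DW.
have window_sup_fin x d : 0 < x -> x <= 1 -> D d -> (0 <= window_sup W x d < +oo)%E.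
  move=> x0 x1 Dd; rewrite window_sup_ge0 //=.
  exact: le_lt_trans (window_sup_le1 _ _ x0 x1 Dd) (ltry _).
apply: ereal_inf_ge_mul.
- by exists (window_sup W r d0), d0.
- by exists (window_sup W s d0), d0.
- by move=> _ [d Dd <-]; exact: window_sup_fin.
- by move=> _ [d Dd <-]; exact: window_sup_fin.
move=> _ _ [d1 Dd1 <-] [d2 Dd2 <-].
have [d Dd le_sup] := window_sup_submul _ _ _ _ r0 s0 s1 Dd1 Dd2.
by apply: ge_ereal_inf; exists (window_sup W (r * s) d); first by exists d.
Qed.

Lemma window_limsup_dichotomy :
  (window_limsup D W r @[r --> 0^'+] --> 0%E) \/
  (forall r, 0 < r -> r <= 1 -> window_limsup D W r = 1%E).
Proof.
apply: submul_dichotomy.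
- exact: window_limsup_ge0.
- exact: window_limsup_le1.
- exact: window_limsup_nondecreasing.
- exact: window_limsup_submul.
Qed.

End WindowedLimsup.

Arguments window_limsup {R}.
Arguments window_limsup_dichotomy {R h}.

Section Windows.
Variable R : realType.

Lemma admissible_windows_at0 :
  admissible_windows (`]0, +oo[%classic : set R) (fun d => `]0, d[%classic).
Proof.
split.
- by exists 1; rewrite /= in_itv /= andbT.
- by move=> d t _; rewrite /= in_itv /= => /andP[].
- move=> d; rewrite /= in_itv /= andbT => d0; exists (d / 2).
  by rewrite /= in_itv /= divr_gt0 //= ltr_pdivrMr // ltr_pMr // ltr1n.
move=> s s0 s1 d1 d2; rewrite /= !in_itv /= !andbT => d10 d20.
exists (Order.min d1 d2); first by rewrite /= in_itv /= andbT lt_min d10 d20.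
move=> t; rewrite /= !in_itv /= lt_min => /andP[t0 /andP[td1 td2]].
rewrite t0 td2 mulr_gt0 //=; split => //.
by apply: le_lt_trans td1; rewrite ler_piMl // ltW.
Qed.

Lemma admissible_windows_atoo :
  admissible_windows (`]0, +oo[%classic : set R) (fun M => `]M, +oo[%classic).
Proof.
split.
- by exists 1; rewrite /= in_itv /= andbT.
- by move=> d t; rewrite /= !in_itv /= !andbT => d0 dt; exact: lt_trans dt.
- move=> d; rewrite /= in_itv /= andbT => d0; exists (d + 1).
  by rewrite /= in_itv /= andbT ltrDl ltr01.
move=> s s0 s1 d1 d2; rewrite /= !in_itv /= !andbT => d10 d20.
exists (Order.max (d1 / s) d2); first by rewrite /= in_itv /= andbT lt_max d20 orbT.
move=> t; rewrite /= !in_itv /= !andbT gt_max => /andP[t1 t2]; split => //.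
by move: t1; rewrite ltr_pdivrMr // mulrC.
Qed.

Lemma admissible_windows_global :
  admissible_windows [set 0 : R] (fun=> `]0, +oo[%classic).
Proof.
split.
- by exists 0.
- by move=> _ t _; rewrite /= in_itv /= andbT.
- by move=> _ _; exists 1; rewrite /= in_itv /= andbT.
move=> s s0 _ _ _ _ _; exists 0 => // t; rewrite /= !in_itv /= !andbT => t0.
by rewrite mulr_gt0.
Qed.

End Windows.

Lemma Theta_window_limsup (R : realType) (h : R -> R) :
  Theta h = window_limsup h [set 0] (fun=> `]0, +oo[%classic).
Proof. by apply/funext => r; rewrite /window_limsup image_set1 ereal_inf1. Qed.

Theorem corollary4p6 (R : realType) (h : R -> R)
  (hpos : forall x : R, 0 < x -> 0 < h x)
  (hmono : forall x y : R, 0 < x -> x <= y -> h x <= h y)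
  (hcont : {in `]0, +oo[%classic, continuous h})
  (Th : R -> \bar R)
  (hTh : Th = Theta0 h \/ Th = ThetaInf h \/ Th = Theta h) :
  (Th r @[r --> 0^'+] --> 0%E) \/
  (forall r : R, 0 < r -> r <= 1 -> Th r = 1%E).
Proof.
have dichotomy := window_limsup_dichotomy hpos hmono.
case: hTh => [->|[->|->]].
- exact: (dichotomy _ _ (admissible_windows_at0 R)).
- exact: (dichotomy _ _ (admissible_windows_atoo R)).
- rewrite Theta_window_limsup; exact: (dichotomy _ _ (admissible_windows_global R)).
Qed.
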